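(* Let $A$, $c$ be as in the context. If the system $yA\le c$ is totally dual integral, then $IP_{A,c}$ is a Gomory family.
   Context: $A\in\mathbb Z^{d\times n}$ has rank $d$, columns $a_1,\dots,a_n$, $cone(A)$ pointed, $\{x\in\mathbb R^n_{\ge0}:Ax=0\}=\{0\}$, $\mathbb ZA=\mathbb Z^d$, $\mathbb NA=\{Au:u\in\mathbb N^n\}$. For $c\in\mathbb Z^n$ and $b\in\mathbb NA$, $IP_{A,c}(b)=\min\{c\cdot x: Ax=b,\ x\in\mathbb N^n\}$; $IP_{A,c}$ is the family of these programs; for $b\in cone(A)$, $LP_{A,c}(b)=\min\{c\cdot x:Ax=b,\ x\ge0\}$. The system $yA\le c$ is totally dual integral if $LP_{A,c}(b)$ has an integral optimal solution for every $b\in cone(A)\cap\mathbb Z^d$. The regular triangulation $\Delta_c$ is the simplicial complex of all $\sigma\subseteq\{1,\dots,n\}$ for which some $y\in\mathbb R^d$ has $y\cdot a_j=c_j$ ($j\in\sigma$), $y\cdot a_j<c_j$ ($j\notin\sigma$). $c$ is generic: $\Delta_c$ is a triangulation and every $IP_{A,c}(b)$ has a unique optimal solution. For a maximal face $\sigma$ let $\tilde c_{\bar\sigma}=c_{\bar\sigma}-c_\sigma A_\sigma^{-1}A_{\bar\sigma}$; the (Gomory) group relaxation $G^\sigma(b)$ is $\min\{\tilde c_{\bar\sigma}\cdot x_{\bar\sigma}: A_\sigma x_\sigma+A_{\bar\sigma}x_{\bar\sigma}=b,\ x_{\bar\sigma}\ge0,\ x\in\mathbb Z^n\}$, and it solves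 $IP_{A,c}(b)$ if its optimal solution is non-negative. $IP_{A,c}$ is a Gomory family if for every $b\in\mathbb NA$ there is a maximal face $\sigma$ of $\Delta_c$ such that $G^\sigma(b)$ solves $IP_{A,c}(b)$. *)

From HB Require Import structures.
From mathcomp Require Import all_boot all_order all_algebra.
From mathcomp Require Import reals.
Set Implicit Arguments. Unset Strict Implicit. Unset Printing Implicit Defensive.
Import Order.TTheory GRing.Theory Num.Theory.
Local Open Scope ring_scope.

Section IPdefs.
Variables (R : realType) (d n : nat) (A : 'M[int]_(d, n)) (c : 'rV[int]_n).

Definition AR : 'M[R]_(d, n) := map_mx (fun z : int => z%:~R) A.
Definition cR : 'rV[R]_n := map_mx (fun z : int => z%:~R) c.

Definition nonnegR (x : 'cV[R]_n) := forall j, 0 <= x j 0.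
Definition nonnegZ (x : 'cV[int]_n) := forall j, 0 <= x j 0.

Definition in_cone (v : 'cV[R]_d) := exists x, nonnegR x /\ AR *m x = v.

Definition cone_pointed := forall v, in_cone v -> in_cone (- v) -> v = 0.

Definition kernel_condition :=
  forall x : 'cV[R]_n, nonnegR x -> AR *m x = 0 -> x = 0.

Definition lattice_full := forall b : 'cV[int]_d, exists z : 'cV[int]_n, A *m z = b.

Definition in_NA (b : 'cV[int]_d) := exists u : 'cV[int]_n, nonnegZ u /\ A *m u = b.

Definition IP_feas (b : 'cV[int]_d) (x : 'cV[int]_n) := nonnegZ x /\ A *m x = b.
Definition IP_opt (b : 'cV[int]_d) (x : 'cV[int]_n) :=
  IP_feas b x /\ forall x', IP_feas b x' -> (c *m x) 0 0 <= (c *m x') 0 0.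

Definition LP_feas (b : 'cV[R]_d) (x : 'cV[R]_n) := nonnegR x /\ AR *m x = b.
Definition LP_opt (b : 'cV[R]_d) (x : 'cV[R]_n) :=
  LP_feas b x /\ forall x', LP_feas b x' -> (cR *m x) 0 0 <= (cR *m x') 0 0.

(* yA <= c is totally dual integral: for every b in cone(A) ∩ Z^d,
   LP_{A,c}(b) has an integral optimal solution *)
Definition TDI :=
  forall b : 'cV[int]_d, in_cone (map_mx (fun z : int => z%:~R) b) ->
    exists z : 'cV[int]_n,
      LP_opt (map_mx (fun z : int => z%:~R) b) (map_mx (fun z : int => z%:~R) z).

(* sigma is a face of the regular triangulation Delta_c *)
Definition face (s : {set 'I_n}) :=
  exists y : 'rV[R]_d, forall j,
    if j \in s then (y *m AR) 0 j = cR 0 j else (y *m AR) 0 j < cR 0 j.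

Definition supported (s : {set 'I_n}) (x : 'cV[R]_n) := forall j, j \notin s -> x j 0 = 0.

Definition lin_indep_cols (s : {set 'I_n}) :=
  forall x : 'cV[R]_n, supported s x -> AR *m x = 0 -> x = 0.

(* Delta_c is a triangulation of cone(A): every cell is simplicial and
   the cells cover cone(A) *)
Definition is_triangulation :=
  (forall s, face s -> lin_indep_cols s) /\
  (forall v, in_cone v -> exists s, face s /\
      exists x, nonnegR x /\ supported s x /\ AR *m x = v).

Definition generic :=
  is_triangulation /\ forall b, in_NA b -> exists! x, IP_opt b x.

Definition maximal_face (s : {set 'I_n}) :=
  face s /\ forall t, face t -> s \subset t -> t = s.

Definition proj_on (s : {set 'I_n}) : 'M[R]_n := diag_mx (\row_j (j \in s)%:R).

(* A_s and c_s (columns outside s zeroed out), and c_s A_s^{-1} *)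
Definition A_sig s := AR *m proj_on s.
Definition c_sig s := cR *m proj_on s.
Definition y_sig s : 'rV[R]_d := c_sig s *m pinvmx (A_sig s).

Definition ctilde s : 'rV[R]_n := cR - y_sig s *m AR.

Definition G_feas (s : {set 'I_n}) (b : 'cV[int]_d) (x : 'cV[int]_n) :=
  A *m x = b /\ forall j, j \notin s -> 0 <= x j 0.
Definition G_obj (s : {set 'I_n}) (x : 'cV[int]_n) : R :=
  \sum_(j | j \notin s) ctilde s 0 j * (x j 0)%:~R.
Definition G_opt s b x :=
  G_feas s b x /\ forall x', G_feas s b x' -> G_obj s x <= G_obj s x'.

Definition G_solves s b :=
  (exists x, G_opt s b x) /\ forall x, G_opt s b x -> nonnegZ x.

Definition gomory_family :=
  forall b, in_NA b -> exists s, maximal_face s /\ G_solves s b.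

End IPdefs.

From Pilot Require Import Defs.
From HB Require Import structures.
From mathcomp Require Import all_boot all_order all_algebra.
From mathcomp Require Import reals boolp.
Import Order.TTheory GRing.Theory Num.Theory.
Set Implicit Arguments. Unset Strict Implicit. Unset Printing Implicit Defensive.
Local Open Scope ring_scope.

(* By total dual integrality LP_{A,c}(b) has an integral optimum z.  The
   triangulation puts b in the cone of a face s with dual witness y, and
   complementary slackness forces z to vanish off s, hence off any maximal
   face σ containing s.  For maximal σ the rows of A_σ are independent
   (otherwise y could be moved along a vector orthogonal to the columns of
   A_σ until it becomes tight on a larger face), so c_σ A_σ^{-1} is the
   witness of σ and the reduced costs are positive off σ.  Then z has reduced
   cost 0, so it is optimal for G^σ(b), and any other optimum also vanishes
   off σ and differs from z by a kernel vector of A_σ, which is 0. *)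

Lemma cost_split (R : comPzRingType) (d n : nat) (M : 'M[R]_(d, n)) (C : 'rV_n)
    (y : 'rV_d) (x : 'cV_n) :
  (C *m x) 0 0 = (y *m (M *m x)) 0 0 + \sum_j (C - y *m M) 0 j * x j 0.
Proof.
rewrite -{1}[C](subrK (y *m M)) mulmxDl mulmxA addrC mxE [X in _ + X]mxE.
by congr (_ + _); apply: eq_bigr => j _; rewrite !mxE.
Qed.

Lemma psum_mul_eq0 (R : numDomainType) (I : finType) (P : pred I) (a x : I -> R) :
    (forall i, P i -> 0 <= a i) -> (forall i, P i -> 0 <= x i) ->
    \sum_(i | P i) a i * x i = 0 ->
  forall i, P i -> 0 < a i -> x i = 0.
Proof.
move=> a_ge0 x_ge0 sum0 i Pi a_gt0.
have /eqP := psumr_eq0P (fun j Pj => mulr_ge0 (a_ge0 j Pj) (x_ge0 j Pj)) sum0 Pi.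
by rewrite mulf_eq0 gt_eqF //= => /eqP.
Qed.

Lemma ex_maximal_superset (T : finType) (P : {set T} -> Prop) (s : {set T}) :
  P s -> exists t, [/\ P t, s \subset t & forall u, P u -> t \subset u -> u = t].
Proof.
move=> Ps; have [t /maxsetP[/asboolP Pt tmax] st] :=
  maxset_exists (P := fun t => `[< P t >]) (asboolT Ps).
by exists t; split=> // u /asboolP; apply: tmax.
Qed.

Section GomoryFamily.
Variables (R : realType) (d n : nat) (A : 'M[int]_(d, n)) (c : 'rV[int]_n).

Local Notation toR := (map_mx (fun z : int => z%:~R : R)).
Local Notation AR := (Defs.AR R A).
Local Notation cR := (Defs.cR R c).
Local Notation face := (Defs.face R A c).
Local Notation maximal_face := (Defs.maximal_face R A c).
Local Notation ctilde := (Defs.ctilde R A c).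
Local Notation G_obj := (Defs.G_obj R A c).

Lemma toR_inj m p : injective (toR : 'M[int]_(m, p) -> 'M[R]_(m, p)).
Proof.
move=> x y /matrixP xy; apply/matrixP=> i j.
by apply: (@intr_inj R); have := xy i j; rewrite !mxE.
Qed.

Lemma LP_feas_toR b x : LP_feas A (toR b) (toR x) <-> IP_feas A b x.
Proof.
rewrite /LP_feas /IP_feas /nonnegR /nonnegZ /Defs.AR -map_mxM.
split=> [] [x_ge0 Axb]; split.
- by move=> j; have := x_ge0 j; rewrite mxE ler0z.
- exact: toR_inj.
- by move=> j; rewrite mxE ler0z.
- by rewrite Axb.
Qed.

Lemma in_cone_of_NA b : in_NA A b -> in_cone A (toR b).
Proof. by move=> [u /LP_feas_toR u_feas]; exists (toR u). Qed.

Definition face_witness (s : {set 'I_n}) (y : 'rV[R]_d) :=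
  forall j, if j \in s then (y *m AR) 0 j = cR 0 j else (y *m AR) 0 j < cR 0 j.

Definition slack (y : 'rV[R]_d) : 'rV[R]_n := cR - y *m AR.

Lemma face_witness_tight (y : 'rV[R]_d) :
  (forall j, 0 <= slack y 0 j) -> face_witness [set j | slack y 0 j == 0] y.
Proof.
move=> slack_ge0 j; rewrite inE; have := slack_ge0 j; rewrite !mxE subr_ge0.
by rewrite le_eqVlt subr_eq0 eq_sym; case: eqP.
Qed.

Lemma A_sig_entry s (w : 'rV[R]_d) j :
  (w *m A_sig R A s) 0 j = (w *m AR) 0 j * (j \in s)%:R.
Proof. by rewrite /A_sig /proj_on mulmxA mul_mx_diag !mxE. Qed.

Section Witness.
Variables (s : {set 'I_n}) (y : 'rV[R]_d).
Hypothesis ys : face_witness s y.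

Lemma slack_eq0 j : j \in s -> slack y 0 j = 0.
Proof. by move=> js; have := ys j; rewrite js !mxE => ->; rewrite subrr. Qed.

Lemma slack_gt0 j : j \notin s -> 0 < slack y 0 j.
Proof. by move=> js; have := ys j; rewrite (negbTE js) !mxE subr_gt0. Qed.

Lemma slack_ge0 j : 0 <= slack y 0 j.
Proof. by case: (boolP (j \in s)) => [/slack_eq0 -> | /slack_gt0 /ltW]. Qed.

Lemma LP_opt_supported (b : 'cV[R]_d) (x z : 'cV[R]_n) :
  LP_feas A b x -> supported s x -> LP_opt A c b z -> supported s z.
Proof.
move=> [x_ge0 Axb] xs [[z_ge0 Azb] zopt] j js.
have cx : (cR *m x) 0 0 = (y *m b) 0 0.
  rewrite (cost_split AR cR y) Axb big1 ?addr0 // => i _.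
  by case: (boolP (i \in s)) => [/slack_eq0 -> | /xs ->]; rewrite ?mul0r ?mulr0.
have := zopt x (conj x_ge0 Axb).
rewrite cx (cost_split AR cR y) Azb gerDl -/(slack y) => sum_le0.
have sum_ge0 : 0 <= \sum_i slack y 0 i * z i 0.
  by apply: sumr_ge0 => i _; exact: mulr_ge0 (slack_ge0 i) (z_ge0 i).
apply: (psum_mul_eq0 (P := predT) (fun i _ => slack_ge0 i) (fun i _ => z_ge0 i)) => //.
  by apply/eqP; rewrite eq_le sum_le0 sum_ge0.
exact: slack_gt0 js.
Qed.

Lemma face_witness_ascent (w : 'rV[R]_d) j0 :
    (forall j, j \in s -> (w *m AR) 0 j = 0) -> 0 < (w *m AR) 0 j0 ->
  exists2 t, face t & s \proper t.
Proof.
move=> w_s wA_j0_gt0.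
have [jm wA_jm_gt0 jm_min] := arg_minP (P := fun j => 0 < (w *m AR) 0 j)
  (fun j => slack y 0 j / (w *m AR) 0 j) wA_j0_gt0.
(* The longest step along w keeping y dual feasible; it makes jm tight. *)
set step := slack y 0 jm / (w *m AR) 0 jm.
have jm_s : jm \notin s by apply: contraTN wA_jm_gt0 => /w_s ->; rewrite ltxx.
have step_gt0 : 0 < step by rewrite divr_gt0 // slack_gt0.
have slackE j : slack (y + step *: w) 0 j = slack y 0 j - step * (w *m AR) 0 j.
  by rewrite /slack mulmxDl -scalemxAl opprD addrA !mxE.
have slack'_ge0 j : 0 <= slack (y + step *: w) 0 j.
  rewrite slackE subr_ge0; case: (ltrP 0 ((w *m AR) 0 j)) => [wA_gt0 | wA_le0].
    by rewrite -ler_pdivlMr // jm_min.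
  by apply: le_trans (slack_ge0 j); rewrite mulr_ge0_le0 // ltW.
exists [set j | slack (y + step *: w) 0 j == 0].
  by exists (y + step *: w); apply: face_witness_tight.
apply/properP; split.
  by apply/subsetP => j js; rewrite inE slackE w_s // mulr0 subr0 slack_eq0.
by exists jm => //; rewrite inE slackE /step divfK ?subrr // gt_eqF.
Qed.

Lemma c_sig_witness : c_sig R c s = y *m A_sig R A s.
Proof.
apply/rowP => j; rewrite A_sig_entry /c_sig /proj_on mul_mx_diag !mxE.
by have := ys j; rewrite !mxE; case: (j \in s) => [->|_]; rewrite ?mulr0.
Qed.

End Witness.

Lemma maximal_face_row_free s :
  \rank AR = d -> maximal_face s -> row_free (A_sig R A s).
Proof.
move=> rankA [[y ys] smax]; apply: inj_row_free => w wAs0.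
have w_s j : j \in s -> (w *m AR) 0 j = 0.
  by move=> js; have := A_sig_entry s w j; rewrite wAs0 js mulr1 mxE.
have no_ascent (v : 'rV_d) j0 :
    (forall j, j \in s -> (v *m AR) 0 j = 0) -> ~ 0 < (v *m AR) 0 j0.
  move=> v_s /(face_witness_ascent ys v_s) [t ft /andP[st ts]].
  by move: ts; rewrite (smax t ft st) subxx.
apply/eqP; rewrite -(mulmx_free_eq0 _ (B := AR)) /row_free ?rankA //.
apply/rV0Pn => -[j0]; case: ltrgtP => // wA_j0 _.
  apply: (no_ascent (- w) j0); rewrite mulNmx; last by rewrite mxE oppr_gt0.
  by move=> j /w_s wA_j; rewrite [LHS]mxE wA_j oppr0.
exact: no_ascent wA_j0.
Qed.

Lemma y_sig_maximal s y :
  \rank AR = d -> maximal_face s -> face_witness s y -> y_sig R A c s = y.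
Proof.
move=> rankA smax ys; apply: (row_free_inj (maximal_face_row_free rankA smax)).
by rewrite /= /y_sig mulmxKpV (c_sig_witness ys) // submxMl.
Qed.

Lemma ctilde_maximal_gt0 s :
  \rank AR = d -> maximal_face s -> forall j, j \notin s -> 0 < ctilde s 0 j.
Proof.
move=> rankA smax; have [[y ys] _] := smax.
by rewrite /ctilde (y_sig_maximal rankA smax ys); apply: slack_gt0.
Qed.

Lemma G_solves_of_support s b z :
    lin_indep_cols R A s -> (forall j, j \notin s -> 0 < ctilde s 0 j) ->
    IP_feas A b z -> (forall j, j \notin s -> z j 0 = 0) ->
  G_solves R A c s b.
Proof.
move=> indep ctilde_gt0 [z_ge0 Azb] z_s.
have G_obj_ge0 x : G_feas A s b x -> 0 <= G_obj s x.
  move=> [_ x_ge0]; apply: sumr_ge0 => j js.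
  by rewrite mulr_ge0 ?ler0z ?x_ge0 ?ltW ?ctilde_gt0.
have Gz0 : G_obj s z = 0 by apply: big1 => j js; rewrite z_s // mulr0.
have zG : G_feas A s b z by split=> // j _; apply: z_ge0.
split; first by exists z; split=> // x xG; rewrite Gz0 G_obj_ge0.
move=> x [[Axb x_ge0] xopt].
have Gx0 : G_obj s x = 0 by apply/eqP; rewrite eq_le G_obj_ge0 // andbT -Gz0 xopt.
have x_s j : j \notin s -> x j 0 = 0.
  move=> js; apply/eqP; rewrite -(intr_eq0 R); apply/eqP.
  apply: (psum_mul_eq0 _ _ Gx0 js (ctilde_gt0 j js)) => i i_s.
    exact/ltW/ctilde_gt0.
  by rewrite ler0z x_ge0.
have x_eq_z : x = z.
  apply: toR_inj; apply/eqP; rewrite -subr_eq0; apply/eqP.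
  apply: indep => [j js |]; first by rewrite !mxE x_s ?z_s // subrr.
  by rewrite mulmxBr /Defs.AR -!map_mxM Axb Azb subrr.
by rewrite x_eq_z.
Qed.

End GomoryFamily.

Theorem corollary3p4 (R : realType) (d n : nat) (A : 'M[int]_(d, n)) (c : 'rV[int]_n) :
  \rank (AR R A) = d ->
  cone_pointed R A ->
  kernel_condition R A ->
  lattice_full A ->
  generic R A c ->
  TDI R A c ->
  gomory_family R A c.
Proof.
move=> rankA _ _ _ [[indep cover] _] tdi b /(in_cone_of_NA R) b_cone.
have [s [[y ys] [x [x_ge0 [x_s Axb]]]]] := cover _ b_cone.
have [z zopt] := tdi b b_cone.
have z_s := LP_opt_supported ys (conj x_ge0 Axb) x_s zopt.
have [t [t_face st tmax]] := ex_maximal_superset (ex_intro _ y ys : face R A c s).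
have t_max : maximal_face R A c t by split.
exists t; split=> //; apply: (G_solves_of_support (indep t t_face)).
- exact: ctilde_maximal_gt0 rankA t_max.
- exact/LP_feas_toR/zopt.1.
- move=> j jt; have := z_s j (contra (subsetP st j) jt).
  by rewrite mxE => /eqP; rewrite intr_eq0 => /eqP.
Qed.
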